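(* Fix $\mathbf{v}\in\mathbb{R}^{K+1}\setminus\{\mathbf{0}\}$ and $\bar{\mathbf{f}}\in\mathbb{C}^{n}\setminus\{\mathbf{0}\}$, and assume that the matrix $\mathbf{B}(\bar{\mathbf{f}},\mathbf{v})$ defined below is invertible. Then the first-order stationarity (KKT) condition of the unconstrained problem $\min_{\bar{\mathbf{f}},\mathbf{v}} f(\bar{\mathbf{f}},\mathbf{v})$ with respect to $\bar{\mathbf{f}}$, namely $\nabla_{\bar{\mathbf{f}}^*} f(\bar{\mathbf{f}},\mathbf{v})=\mathbf{0}$, holds if and only if $$\mathbf{B}(\bar{\mathbf{f}},\mathbf{v})^{-1}\mathbf{A}(\bar{\mathbf{f}},\mathbf{v})\,\bar{\mathbf{f}}=\lambda(\bar{\mathbf{f}},\mathbf{v})\,\bar{\mathbf{f}},$$ where $$\mathbf{A}(\bar{\mathbf{f}},\mathbf{v})=\lambda_{\mathrm{num}}\Big\{\sum_{j=1}^{K}\Big[R_{\mathrm{target},j}\Big(\tfrac{\mathbf{A}_j^{p}}{\bar{\mathbf{f}}^{H}\mathbf{A}_j^{p}\bar{\mathbf{f}}}+w_j\mathbf{L}_A\Big)+\bar R_{p,j}\tfrac{\mathbf{B}_j^{p}}{\bar{\mathbf{f}}^{H}\mathbf{B}_j^{p}\bar{\mathbf{f}}}+w_jC_j\mathbf{L}_B+w_j\bar R_{p,j}\mathbf{L}_B+C_j\tfrac{\mathbf{B}_j^{p}}{\bar{\mathbf{f}}^{H}\mathbf{B}_j^{p}\bar{\mathbf{f}}}\Big]+\eta_{\mathrm{mc}}\Big[R_{\mathrm{target,mc}}w_{K+1}\mathbf{L}_A+w_{K+1}C_{\mathrm{mc}}\mathbf{L}_B\Big]\Big\},$$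 $$\mathbf{B}(\bar{\mathbf{f}},\mathbf{v})=\lambda_{\mathrm{den}}\Big\{\sum_{j=1}^{K}\Big[R_{\mathrm{target},j}\Big(\tfrac{\mathbf{B}_j^{p}}{\bar{\mathbf{f}}^{H}\mathbf{B}_j^{p}\bar{\mathbf{f}}}+w_j\mathbf{L}_B\Big)+\bar R_{p,j}\tfrac{\mathbf{A}_j^{p}}{\bar{\mathbf{f}}^{H}\mathbf{A}_j^{p}\bar{\mathbf{f}}}+w_jC_j\mathbf{L}_A+w_j\bar R_{p,j}\mathbf{L}_A+C_j\tfrac{\mathbf{A}_j^{p}}{\bar{\mathbf{f}}^{H}\mathbf{A}_j^{p}\bar{\mathbf{f}}}\Big]+\eta_{\mathrm{mc}}\Big[R_{\mathrm{target,mc}}w_{K+1}\mathbf{L}_B+w_{K+1}C_{\mathrm{mc}}\mathbf{L}_A\Big]\Big\},$$ with all quantities $\lambda_{\mathrm{num}},\lambda_{\mathrm{den}},\lambda,w_j,C_j,C_{\mathrm{mc}},\bar R_{p,j},\mathbf{L}_A,\mathbf{L}_B$ evaluated at $(\bar{\mathbf{f}},\mathbf{v})$.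
   Context: Let $K\ge1$, $N_t\ge1$ be integers and $n:=N_t(K+1)$. For each $k\in\{1,\dots,K\}$ let $\mathbf{a}_k\in\mathbb{C}^{N_t}$ and $\gamma_k>0$; let $\sigma^2>0$, $P>0$, $\alpha>0$, $\eta_{\mathrm{mc}}>0$, and real numbers $R_{\mathrm{target},1},\dots,R_{\mathrm{target},K},R_{\mathrm{target,mc}}$ be given. Write $\mathrm{blkdiag}$ for a block-diagonal matrix with $K+1$ diagonal blocks of size $N_t\times N_t$, and $\mathbf{I}$ for the identity. Define the $n\times n$ matrices $\mathbf{A}_k^{c}=\mathrm{blkdiag}(\gamma_k\mathbf{a}_k\mathbf{a}_k^H,\dots,\gamma_k\mathbf{a}_k\mathbf{a}_k^H)+\frac{\sigma^2}{P}\mathbf{I}$, $\mathbf{B}_k^{c}=\mathbf{A}_k^{c}-\mathrm{blkdiag}(\gamma_k\mathbf{a}_k\mathbf{a}_k^H,0,\dots,0)$, $\mathbf{A}_k^{p}=\mathrm{blkdiag}(0,\gamma_k\mathbf{a}_k\mathbf{a}_k^H,\dots,\gamma_k\mathbf{a}_k\mathbf{a}_k^H)+\frac{\sigma^2}{P}\mathbf{I}$, $\mathbf{B}_k^{p}=\mathbf{A}_k^{p}-\mathrm{blkdiag}(0,\dots,0,\gamma_k\mathbf{a}_k\mathbf{a}_k^H,0,\dots,0)$ where the nonzero block is the $(k+1)$-th block. For $\bar{\mathbf{f}}\in\mathbb{C}^n\setminus\{\mathbf 0\}$ define $\bar R_{c,k}(\bar{\mathbf{f}})=\log_2\frac{\bar{\mathbf{f}}^H\mathbf{A}_k^c\bar{\mathbf{f}}}{\bar{\mathbf{f}}^H\mathbf{B}_k^c\bar{\mathbf{f}}}$,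 $\bar R_{p,k}(\bar{\mathbf{f}})=\log_2\frac{\bar{\mathbf{f}}^H\mathbf{A}_k^p\bar{\mathbf{f}}}{\bar{\mathbf{f}}^H\mathbf{B}_k^p\bar{\mathbf{f}}}$, the smoothed minimum (LogSumExp) $S(\bar{\mathbf{f}})=-\alpha\ln\big(\frac1K\sum_{i=1}^K\exp(-\bar R_{c,i}(\bar{\mathbf{f}})/\alpha)\big)$, the weights $\pi_i(\bar{\mathbf{f}})=\exp(-\bar R_{c,i}/\alpha)/\sum_{\ell=1}^K\exp(-\bar R_{c,\ell}/\alpha)$, and $\mathbf{L}_A(\bar{\mathbf{f}})=\sum_{i=1}^K\pi_i\frac{\mathbf{A}_i^c}{\bar{\mathbf{f}}^H\mathbf{A}_i^c\bar{\mathbf{f}}}$, $\mathbf{L}_B(\bar{\mathbf{f}})=\sum_{i=1}^K\pi_i\frac{\mathbf{B}_i^c}{\bar{\mathbf{f}}^H\mathbf{B}_i^c\bar{\mathbf{f}}}$. For $\mathbf{v}=(v_1,\dots,v_{K+1})^T\in\mathbb{R}^{K+1}\setminus\{\mathbf 0\}$, let $\mathbf{E}_k$ ($k=1,\dots,K+1$) be the $(K+1)\times(K+1)$ diagonal matrix with $1$ in position $(k,k)$ and $0$ elsewhere, $w_k(\mathbf{v})=\frac{\mathbf{v}^T\mathbf{E}_k\mathbf{v}}{\mathbf{v}^T\mathbf{v}}=\frac{v_k^2}{\|\mathbf{v}\|^2}$, $C_k(\bar{\mathbf{f}},\mathbf{v})=w_k(\mathbf{v})S(\bar{\mathbf{f}})$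 for $k=1,\dots,K$ (common-rate portions of unicast messages) and $C_{\mathrm{mc}}(\bar{\mathbf{f}},\mathbf{v})=w_{K+1}(\mathbf{v})S(\bar{\mathbf{f}})$ (multicast common-rate portion). Objective: $f(\bar{\mathbf{f}},\mathbf{v})=\sum_{j=1}^K\big(R_{\mathrm{target},j}-\bar R_{p,j}(\bar{\mathbf{f}})-C_j(\bar{\mathbf{f}},\mathbf{v})\big)^2+\eta_{\mathrm{mc}}\big(R_{\mathrm{target,mc}}-C_{\mathrm{mc}}(\bar{\mathbf{f}},\mathbf{v})\big)^2$. Scalars: $\lambda_{\mathrm{num}}(\bar{\mathbf{f}},\mathbf{v})=\prod_{j=1}^K\exp\big(-(R_{\mathrm{target},j}-\bar R_{p,j}-C_j)^2\big)$, $\lambda_{\mathrm{den}}(\bar{\mathbf{f}},\mathbf{v})=\exp\big(\eta_{\mathrm{mc}}(R_{\mathrm{target,mc}}-C_{\mathrm{mc}})^2\big)$, $\lambda(\bar{\mathbf{f}},\mathbf{v})=\lambda_{\mathrm{num}}/\lambda_{\mathrm{den}}=\exp(-f(\bar{\mathbf{f}},\mathbf{v}))$. $\nabla_{\bar{\mathbf{f}}^*}$ denotes the Wirtinger gradient with respect to the complex conjugate of $\bar{\mathbf{f}}$ (its vanishing is equivalent to vanishing of the real gradient with respect to the real and imaginary parts of $\bar{\mathbf{f}}$). *)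

From HB Require Import structures.
From mathcomp Require Import all_boot all_order all_algebra.
From mathcomp Require Import all_classical all_reals all_analysis.
From mathcomp Require Import complex.
Set Implicit Arguments. Unset Strict Implicit. Unset Printing Implicit Defensive.
Import Order.TTheory GRing.Theory Num.Theory.
Local Open Scope ring_scope.

(* System parameters.  Users are indexed by 'I_K (user k of the paper is
   index k-1 here). *)
Record sysp (R : realType) (Nt K : nat) := Sysp {
  ach   : 'I_K -> 'cV[R[i]]_Nt;
  gam   : 'I_K -> R;
  sig2  : R;
  pow   : R;
  alph  : R;
  etamc : R;
  Rtgt  : 'I_K -> R;
  Rtmc  : R
}.

Section Defs.
Variables (R : realType) (Nt K : nat) (s : sysp R Nt K).
Local Notation C := R[i].

(* n = N_t (K+1), realised as the size of a block-diagonal matrix with K+1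
   blocks of size N_t. *)
Definition dimn := (\sum_(i < K.+1) Nt)%N.

Definition rC (x : R) : C := Complex x 0.

Definition ctr (m p : nat) (A : 'M[C]_(m, p)) : 'M[C]_(p, m) := (map_mx conjc A)^T.

(* block-diagonal matrix with K+1 blocks (block 0 = common stream,
   block k+1 = private stream of user k) *)
Definition blkdiag (B : 'I_K.+1 -> 'M[C]_Nt) : 'M[C]_dimn :=
  @mxdiag C K.+1 (fun _ => Nt) B.

Definition rk1 (k : 'I_K) : 'M[C]_Nt :=
  rC (gam s k) *: (ach s k *m ctr (ach s k)).

Definition noiseI : 'M[C]_dimn := (rC (sig2 s / pow s))%:M.

Definition Ac (k : 'I_K) : 'M[C]_dimn := blkdiag (fun _ => rk1 k) + noiseI.
Definition Bc (k : 'I_K) : 'M[C]_dimn :=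
  Ac k - blkdiag (fun b => if b == ord0 then rk1 k else 0).
Definition Ap (k : 'I_K) : 'M[C]_dimn :=
  blkdiag (fun b => if b == ord0 then 0 else rk1 k) + noiseI.
Definition Bp (k : 'I_K) : 'M[C]_dimn :=
  Ap k - blkdiag (fun b => if b == lift ord0 k then rk1 k else 0).

(* Hermitian form f^H M f (real part; it is real for Hermitian M) *)
Definition qf (M : 'M[C]_dimn) (f : 'cV[C]_dimn) : R :=
  @complex.Re R ((ctr f *m M *m f) ord0 ord0).

Definition log2 (x : R) : R := ln x / ln 2.

Definition Rcb (k : 'I_K) (f : 'cV[C]_dimn) : R := log2 (qf (Ac k) f / qf (Bc k) f).
Definition Rpb (k : 'I_K) (f : 'cV[C]_dimn) : R := log2 (qf (Ap k) f / qf (Bp k) f).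

Definition Ssm (f : 'cV[C]_dimn) : R :=
  - alph s * ln (K%:R^-1 * \sum_(i < K) expR (- Rcb i f / alph s)).

Definition piw (i : 'I_K) (f : 'cV[C]_dimn) : R :=
  expR (- Rcb i f / alph s) / \sum_(l < K) expR (- Rcb l f / alph s).

Definition LA (f : 'cV[C]_dimn) : 'M[C]_dimn :=
  \sum_(i < K) rC (piw i f / qf (Ac i) f) *: Ac i.
Definition LB (f : 'cV[C]_dimn) : 'M[C]_dimn :=
  \sum_(i < K) rC (piw i f / qf (Bc i) f) *: Bc i.

(* v in R^{K+1}; slot j (0-indexed) of v is v_{j+1} of the paper:
   slots 0..K-1 for the users, slot K (= ord_max) for the multicast message *)
Definition wv (v : 'cV[R]_K.+1) (k : 'I_K.+1) : R :=
  v k ord0 ^+ 2 / \sum_(i < K.+1) v i ord0 ^+ 2.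

Definition uslot (j : 'I_K) : 'I_K.+1 := widen_ord (leqnSn K) j.

Definition Cu (f : 'cV[C]_dimn) (v : 'cV[R]_K.+1) (j : 'I_K) : R :=
  wv v (uslot j) * Ssm f.
Definition Cmc (f : 'cV[C]_dimn) (v : 'cV[R]_K.+1) : R := wv v ord_max * Ssm f.

Definition obj (f : 'cV[C]_dimn) (v : 'cV[R]_K.+1) : R :=
  \sum_(j < K) (Rtgt s j - Rpb j f - Cu f v j) ^+ 2
  + etamc s * (Rtmc s - Cmc f v) ^+ 2.

Definition lam_num (f : 'cV[C]_dimn) (v : 'cV[R]_K.+1) : R :=
  \prod_(j < K) expR (- (Rtgt s j - Rpb j f - Cu f v j) ^+ 2).
Definition lam_den (f : 'cV[C]_dimn) (v : 'cV[R]_K.+1) : R :=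
  expR (etamc s * (Rtmc s - Cmc f v) ^+ 2).
Definition lam (f : 'cV[C]_dimn) (v : 'cV[R]_K.+1) : R := lam_num f v / lam_den f v.

Definition Amat (f : 'cV[C]_dimn) (v : 'cV[R]_K.+1) : 'M[C]_dimn :=
  rC (lam_num f v) *:
  (\sum_(j < K)
     (rC (Rtgt s j) *: (rC (qf (Ap j) f)^-1 *: Ap j + rC (wv v (uslot j)) *: LA f)
      + rC (Rpb j f / qf (Bp j) f) *: Bp j
      + rC (wv v (uslot j) * Cu f v j) *: LB f
      + rC (wv v (uslot j) * Rpb j f) *: LB f
      + rC (Cu f v j / qf (Bp j) f) *: Bp j)
   + rC (etamc s) *: (rC (Rtmc s * wv v ord_max) *: LA f
                      + rC (wv v ord_max * Cmc f v) *: LB f)).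

Definition Bmat (f : 'cV[C]_dimn) (v : 'cV[R]_K.+1) : 'M[C]_dimn :=
  rC (lam_den f v) *:
  (\sum_(j < K)
     (rC (Rtgt s j) *: (rC (qf (Bp j) f)^-1 *: Bp j + rC (wv v (uslot j)) *: LB f)
      + rC (Rpb j f / qf (Ap j) f) *: Ap j
      + rC (wv v (uslot j) * Cu f v j) *: LA f
      + rC (wv v (uslot j) * Rpb j f) *: LA f
      + rC (Cu f v j / qf (Ap j) f) *: Ap j)
   + rC (etamc s) *: (rC (Rtmc s * wv v ord_max) *: LB f
                      + rC (wv v ord_max * Cmc f v) *: LA f)).

End Defs.

(* Wirtinger gradient with respect to the conjugate of z, for a real-valued
   function g on C^m:  (dg/dz_k^* ) = 1/2 (dg/dx_k + i dg/dy_k), z_k = x_k + i y_k,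
   the real partial derivatives being taken with derive1. *)
Definition wgrad (R : realType) (m : nat) (g : 'cV[R[i]]_m -> R)
    (z : 'cV[R[i]]_m) : 'cV[R[i]]_m :=
  \col_(k < m)
    Complex (2^-1 * derive1 (fun t : R => g (z + Complex t 0 *: delta_mx k ord0)) 0)
            (2^-1 * derive1 (fun t : R => g (z + Complex 0 t *: delta_mx k ord0)) 0).

(* Along a real line [t |-> f + t d], a Hermitian form [f^H M f] is a quadratic
   polynomial in [t] with derivative [2 Re (d^H M f)] at [0].  Every rate is the
   [log2] of a ratio of such forms, with positive definite denominators thanks to
   the noise, and the objective is a sum of squared residuals of rates and of the
   smoothed minimum, so the chain rule gives its derivative along [d] as
   [-(2 / ln 2) * 2 Re (d^H (A' - B') f)] with [A = lam_num A'] and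
   [B = lam_den B']: the two matrices are built so that each squared residual
   contributes "residual times the gradient of its rate" to [A' - B'].  Taking
   [d = e_k] and [d = i e_k] shows that the Wirtinger gradient is a nonzero
   multiple of [(A' - B') f], and as [B] is invertible and [lam_num, lam_den > 0],
   [(A' - B') f = 0] is equivalent to [B^-1 A f = (lam_num / lam_den) f]. *)

From HB Require Import structures.
From mathcomp Require Import all_boot all_order all_algebra.
From mathcomp Require Import all_classical all_reals all_analysis.
From mathcomp Require Import complex.
From mathcomp Require Import ring.
Import Order.TTheory GRing.Theory Num.Theory.
Local Open Scope ring_scope.

Section PointwiseDerive.
Context {R : realType}.

Lemma is_derive_cstf (c x : R) : is_derive x 1 (fun=> c) 0.
Proof. exact: is_derive_cst. Qed.

Lemma is_derive_idf (x : R) : is_derive x 1 (fun t => t) 1.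
Proof. exact: is_derive_id. Qed.

Lemma is_deriveDf {g h : R -> R} {x a b : R} :
  is_derive x 1 g a -> is_derive x 1 h b ->
  is_derive x 1 (fun t => g t + h t) (a + b).
Proof. by move=> ga hb; exact: (@is_deriveD _ _ _ g h). Qed.

Lemma is_deriveNf {g : R -> R} {x a : R} :
  is_derive x 1 g a -> is_derive x 1 (fun t => - g t) (- a).
Proof. by move=> ga; exact: (@is_deriveN _ _ _ g). Qed.

Lemma is_deriveBf {g h : R -> R} {x a b : R} :
  is_derive x 1 g a -> is_derive x 1 h b ->
  is_derive x 1 (fun t => g t - h t) (a - b).
Proof. by move=> ga hb; apply: is_deriveDf => //; exact: is_deriveNf. Qed.

Lemma is_deriveMf {g h : R -> R} {x a b : R} :
  is_derive x 1 g a -> is_derive x 1 h b ->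
  is_derive x 1 (fun t => g t * h t) (g x * b + h x * a).
Proof. by move=> ga hb; exact: (@is_deriveM _ _ g h). Qed.

Lemma is_deriveVf {g : R -> R} {x a : R} : g x != 0 -> is_derive x 1 g a ->
  is_derive x 1 (fun t => (g t)^-1) (- a / g x ^+ 2).
Proof.
move=> gx0 ga; apply: is_derive_eq (is_deriveV gx0 ga) _.
by change (- (g x) ^- 2 * a = - a / g x ^+ 2); ring.
Qed.

Lemma is_derive_lnf {g : R -> R} {x a : R} : 0 < g x -> is_derive x 1 g a ->
  is_derive x 1 (fun t => ln (g t)) (a / g x).
Proof.
move=> gx0 ga; apply: is_derive_eq (is_derive1_comp (is_derive1_ln gx0) ga) _.
by rewrite mulrC.
Qed.

Lemma is_derive_expRf {g : R -> R} {x a : R} : is_derive x 1 g a ->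
  is_derive x 1 (fun t => expR (g t)) (expR (g x) * a).
Proof. by move=> ga; exact: (is_derive1_comp (is_derive_expR (g x)) ga). Qed.

Lemma is_derive_sumf {n} {G : 'I_n -> R -> R} {x : R} {dG : 'I_n -> R} :
  (forall i, is_derive x 1 (G i) (dG i)) ->
  is_derive x 1 (fun t => \sum_(i < n) G i t) (\sum_(i < n) dG i).
Proof.
move=> hG; have := is_derive_sum hG.
have -> // : \sum_(i < n) G i = (fun t => \sum_(i < n) G i t).
by apply: funext => t; rewrite fct_sumE.
Qed.

Lemma is_derive_sqrf {g : R -> R} {x a : R} : is_derive x 1 g a ->
  is_derive x 1 (fun t => g t ^+ 2) (2 * g x * a).
Proof.
by move=> ga; apply: is_derive_eq (is_deriveMf ga ga) _; ring.
Qed.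

End PointwiseDerive.

Section ComplexFacts.
Context {R : realType}.
Local Notation C := R[i].
Local Notation Re := (@complex.Re R).
Local Notation Im := (@complex.Im R).

Lemma ReD (x y : C) : Re (x + y) = Re x + Re y. Proof. by case: x; case: y. Qed.

Lemma ReB (x y : C) : Re (x - y) = Re x - Re y. Proof. by case: x; case: y. Qed.

Lemma Re_sum n (F : 'I_n -> C) : Re (\sum_(i < n) F i) = \sum_(i < n) Re (F i).
Proof. exact: (big_morph _ ReD). Qed.

Lemma Re_rCM (t : R) (z : C) : Re (rC t * z) = t * Re z.
Proof. by case: z => a b /=; ring. Qed.

Lemma Re_conjc (z : C) : Re (conjc z) = Re z. Proof. by case: z. Qed.

Lemma conjc_rC (t : R) : conjc (rC t) = rC t. Proof. exact: conjc_real. Qed.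

Lemma rCM (x y : R) : rC (x * y) = rC x * rC y.
Proof. by rewrite /rC /=; congr Complex; ring. Qed.

Lemma rC_eq0 (x : R) : (rC x == 0) = (x == 0).
Proof. by rewrite /rC eq_complex /= eqxx andbT. Qed.

Lemma Re_conjcM (z : C) : Re (conjc z * z) = Re z ^+ 2 + Im z ^+ 2.
Proof. by case: z => a b /=; ring. Qed.

Lemma Re_conjcM_ge0 (z : C) : 0 <= Re (conjc z * z).
Proof. by rewrite Re_conjcM addr_ge0 ?sqr_ge0. Qed.

Lemma Re_conjcM_gt0 (z : C) : z != 0 -> 0 < Re (conjc z * z).
Proof.
case: z => a b nz; rewrite Re_conjcM /=.
have [a0|a0] := eqVneq a 0.
  have b0 : b != 0 by apply: contra nz => /eqP ->; rewrite a0.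
  by rewrite ltr_wpDl ?sqr_ge0 // exprn_even_gt0 // b0 orbT.
by rewrite ltr_wpDr ?sqr_ge0 // exprn_even_gt0 // a0 orbT.
Qed.

End ComplexFacts.

Section ConjTranspose.
Context {R : realType}.
Local Notation C := R[i].

Lemma ctrE p q (A : 'M[C]_(p, q)) i j : ctr A i j = conjc (A j i).
Proof. by rewrite !mxE. Qed.

Lemma ctr0 p q : ctr (0 : 'M[C]_(p, q)) = 0.
Proof. by apply/matrixP => i j; rewrite ctrE !mxE conjc0. Qed.

Lemma ctrD p q (A B : 'M[C]_(p, q)) : ctr (A + B) = ctr A + ctr B.
Proof. by rewrite /ctr map_mxD linearD. Qed.

Lemma ctrZ p q (c : C) (A : 'M[C]_(p, q)) : ctr (c *: A) = conjc c *: ctr A.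
Proof. by rewrite /ctr map_mxZ linearZ. Qed.

Lemma ctr_mul p q r (A : 'M[C]_(p, q)) (B : 'M[C]_(q, r)) :
  ctr (A *m B) = ctr B *m ctr A.
Proof. by rewrite /ctr map_mxM trmx_mul. Qed.

Lemma ctrK p q (A : 'M[C]_(p, q)) : ctr (ctr A) = A.
Proof. by apply/matrixP => i j; rewrite !ctrE conjcK. Qed.

Lemma ctr_scalar_rC p (t : R) : ctr ((rC t)%:M : 'M[C]_p) = (rC t)%:M.
Proof.
apply/matrixP => i j; rewrite ctrE !mxE eq_sym.
by case: eqP => _; rewrite ?mulr1n ?mulr0n ?conjc_rC ?conjc0.
Qed.

Lemma ctr_delta m (k : 'I_m) : ctr (delta_mx k ord0) = delta_mx ord0 k :> 'M[C]_(1, m).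
Proof.
apply/matrixP => i j; rewrite ctrE !mxE.
by case: (j == k); case: (i == ord0); rewrite ?conjc0 ?conjc1.
Qed.

End ConjTranspose.

Section BlockDiagonal.
Variables (R : realType) (Nt K : nat).
Local Notation C := R[i].

Lemma ctr_blkdiag (B : 'I_K.+1 -> 'M[C]_Nt) :
  ctr (blkdiag B) = blkdiag (fun b => ctr (B b)).
Proof.
rewrite /ctr /blkdiag -tr_mxdiag; congr trmx.
rewrite /mxdiag /mxblock; apply/matrixP => i j; rewrite !mxE.
case: eqP => _; last by rewrite !mxE conjc0.
have mapE p q (A : 'M[C]_(p, q)) a b : conjc (A a b) = map_mx conjc A a b.
  by rewrite mxE.
rewrite mapE map_conform_mx.
by congr (conform_mx _ _ _ _); apply/matrixP => a b; rewrite !mxE conjc0.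
Qed.

Lemma blkdiag_form (B : 'I_K.+1 -> 'M[C]_Nt) (x y : 'cV[C]_(dimn Nt K)) :
  ctr x *m blkdiag B *m y =
  \sum_(b < K.+1) ctr (submxcol x b) *m B b *m submxcol y b.
Proof.
have ctr_mxcol (X : 'I_K.+1 -> 'cV[C]_Nt) :
    ctr (\mxcol_b X b : 'cV[C]_(dimn Nt K)) = \mxrow_b ctr (X b).
  by apply/matrixP => i j; rewrite !mxE.
rewrite -{1}(submxcolK x) -{1}(submxcolK y) ctr_mxcol -mulmxA /blkdiag.
rewrite mul_mxdiag_mxcol mul_mxrow_mxcol.
by apply: eq_bigr => b _; rewrite mulmxA.
Qed.

End BlockDiagonal.

Section HermitianPsd.
Context {R : realType}.
Local Notation C := R[i].
Local Notation Re := (@complex.Re R).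

Definition herm {p} (M : 'M[C]_p) := ctr M = M.
Definition psd {p} (M : 'M[C]_p) := forall x : 'cV[C]_p, 0 <= Re ((ctr x *m M *m x) ord0 ord0).

Lemma herm0 p : herm (0 : 'M[C]_p). Proof. exact: ctr0. Qed.

Lemma hermD p (M N : 'M[C]_p) : herm M -> herm N -> herm (M + N).
Proof. by rewrite /herm ctrD => -> ->. Qed.

Lemma herm_rank1 p (g : R) (a : 'cV[C]_p) : herm (rC g *: (a *m ctr a)).
Proof. by rewrite /herm ctrZ conjc_rC ctr_mul ctrK. Qed.

Lemma herm_scalar_rC p (t : R) : herm ((rC t)%:M : 'M[C]_p).
Proof. exact: ctr_scalar_rC. Qed.

Lemma herm_blkdiag Nt K (B : 'I_K.+1 -> 'M[C]_Nt) :
  (forall b, herm (B b)) -> herm (blkdiag B).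
Proof. by move=> hB; rewrite /herm ctr_blkdiag; apply: eq_mxdiag => b; apply: hB. Qed.

Lemma psd0 p : psd (0 : 'M[C]_p).
Proof. by move=> x; rewrite mulmx0 mul0mx mxE. Qed.

Lemma psd_rank1 p (g : R) (a : 'cV[C]_p) : 0 <= g -> psd (rC g *: (a *m ctr a)).
Proof.
move=> g0 x; rewrite -scalemxAr -scalemxAl mxE !mulmxA -[_ *m ctr a *m x]mulmxA.
have -> : ctr x *m a = ctr (ctr a *m x) by rewrite ctr_mul ctrK.
by rewrite [X in Re (_ * X)]mxE big_ord1 ctrE Re_rCM mulr_ge0 ?Re_conjcM_ge0.
Qed.

Lemma psd_blkdiag Nt K (B : 'I_K.+1 -> 'M[C]_Nt) :
  (forall b, psd (B b)) -> psd (blkdiag B).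
Proof.
by move=> hB x; rewrite blkdiag_form summxE Re_sum sumr_ge0 // => b _; apply: hB.
Qed.

Lemma Re_ctr_mulmx_gt0 p (x : 'cV[C]_p) : x != 0 -> 0 < Re ((ctr x *m x) ord0 ord0).
Proof.
move=> x0; have [k xk0] : exists k, x k ord0 != 0.
  apply/existsP; apply: contraR x0; rewrite negb_exists => /forallP x0.
  by apply/eqP/matrixP => i j; rewrite ord1 mxE; apply/eqP; rewrite -[_ == _]negbK x0.
rewrite mxE Re_sum (bigD1 k) //= ltr_wpDr ?sumr_ge0 // => [i _|];
  by rewrite ctrE ?Re_conjcM_ge0 ?Re_conjcM_gt0.
Qed.

Lemma psd_add_scalar_gt0 p (M : 'M[C]_p) (c : R) (x : 'cV[C]_p) :
  psd M -> 0 < c -> x != 0 -> 0 < Re ((ctr x *m (M + (rC c)%:M) *m x) ord0 ord0).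
Proof.
move=> hM c0 x0; rewrite mulmxDr mulmxDl mxE ReD ltr_wpDl //.
by rewrite mul_mx_scalar -scalemxAl mxE Re_rCM mulr_gt0 // Re_ctr_mulmx_gt0.
Qed.

End HermitianPsd.

Section ReceivedCovariance.
Variables (R : realType) (Nt K : nat) (s : sysp R Nt K).
Hypotheses (hgam : forall k, 0 < gam s k) (hsig : 0 < sig2 s) (hP : 0 < pow s).
Local Notation C := R[i].
Local Notation n := (dimn Nt K).

Definition rxcov (P : pred 'I_K.+1) (k : 'I_K) : 'M[C]_n :=
  blkdiag (fun b => if P b then 0 else rk1 s k) + noiseI s.

Lemma rxcov_herm P k : herm (rxcov P k).
Proof.
apply: hermD; last exact: herm_scalar_rC.
by apply: herm_blkdiag => b; case: ifP => _; [exact: herm0 | exact: herm_rank1].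
Qed.

Lemma rxcov_qf_gt0 P k (f : 'cV[C]_n) : f != 0 -> 0 < qf (rxcov P k) f.
Proof.
move=> f0; apply: psd_add_scalar_gt0; rewrite ?divr_gt0 //.
by apply: psd_blkdiag => b; case: ifP => _; [exact: psd0 | exact/psd_rank1/ltW].
Qed.

Lemma Ac_rxcov k : Ac s k = rxcov xpred0 k.
Proof. by []. Qed.

Lemma Ap_rxcov k : Ap s k = rxcov (fun b => b == ord0) k.
Proof. by []. Qed.

Lemma Bc_rxcov k : Bc s k = rxcov (fun b => b == ord0) k.
Proof.
rewrite /Bc /Ac /rxcov addrAC /blkdiag -mxdiagB; congr (_ + _).
by apply: eq_mxdiag => b; case: ifP => _; rewrite ?subrr ?subr0.
Qed.

Lemma Bp_rxcov k : Bp s k = rxcov (fun b => (b == ord0) || (b == lift ord0 k)) k.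
Proof.
rewrite /Bp /Ap /rxcov addrAC /blkdiag -mxdiagB; congr (_ + _).
apply: eq_mxdiag => b; have [->|_] := eqVneq b (lift ord0 k).
  by rewrite lift_eqF orbT subrr.
by rewrite orbF subr0.
Qed.

End ReceivedCovariance.

Section FormDerivative.
Context {R : realType} {m : nat}.
Local Notation C := R[i].
Local Notation Re := (@complex.Re R).
Local Notation Im := (@complex.Im R).
Implicit Types (M N : 'M[C]_m) (f d : 'cV[C]_m).

Definition dqf M f d : R := 2 * Re ((ctr d *m M *m f) ord0 ord0).

Lemma dqfD M N f d : dqf (M + N) f d = dqf M f d + dqf N f d.
Proof. by rewrite /dqf mulmxDr mulmxDl mxE ReD mulrDr. Qed.

Lemma dqfB M N f d : dqf (M - N) f d = dqf M f d - dqf N f d.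
Proof.
have entryB (X Y : 'M[C]_1) : (X - Y) ord0 ord0 = X ord0 ord0 - Y ord0 ord0.
  by rewrite !mxE.
by rewrite /dqf mulmxBr mulmxBl entryB ReB mulrBr.
Qed.

Lemma dqfZ (c : R) M f d : dqf (rC c *: M) f d = c * dqf M f d.
Proof. by rewrite /dqf -scalemxAr -scalemxAl mxE Re_rCM mulrCA. Qed.

Lemma dqf_sum n (F : 'I_n -> 'M[C]_m) f d :
  dqf (\sum_(i < n) F i) f d = \sum_(i < n) dqf (F i) f d.
Proof.
by rewrite /dqf mulmx_sumr mulmx_suml summxE Re_sum mulr_sumr.
Qed.

Lemma form_line M f d (t : R) :
  Re ((ctr (f + rC t *: d) *m M *m (f + rC t *: d)) ord0 ord0) =
  Re ((ctr f *m M *m f) ord0 ord0)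
  + t * (Re ((ctr d *m M *m f) ord0 ord0) + Re ((ctr f *m M *m d) ord0 ord0))
  + t ^+ 2 * Re ((ctr d *m M *m d) ord0 ord0).
Proof.
rewrite ctrD ctrZ conjc_rC !(mulmxDr, mulmxDl) -!scalemxAr -!scalemxAl.
by rewrite !mxE !ReD !Re_rCM; ring.
Qed.

Lemma Re_form_herm_swap M f d : herm M ->
  Re ((ctr f *m M *m d) ord0 ord0) = Re ((ctr d *m M *m f) ord0 ord0).
Proof.
move=> hM; have -> : ctr f *m M *m d = ctr (ctr d *m M *m f).
  by rewrite !ctr_mul ctrK hM mulmxA.
by rewrite ctrE Re_conjc.
Qed.

Lemma is_derive_form_line M f d : herm M ->
  is_derive (0 : R) 1
    (fun t => Re ((ctr (f + rC t *: d) *m M *m (f + rC t *: d)) ord0 ord0))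
    (dqf M f d).
Proof.
move=> hM; rewrite (funext (form_line M f d)).
have id0 := is_derive_idf (0 : R).
apply: is_derive_eq (is_deriveDf (is_deriveDf (is_derive_cstf _ _)
    (is_deriveMf id0 (is_derive_cstf _ _)))
  (is_deriveMf (is_derive_sqrf id0) (is_derive_cstf _ _))) _.
by rewrite /dqf Re_form_herm_swap //=; ring.
Qed.

Lemma dqf_delta M f k : dqf M f (delta_mx k ord0) = 2 * Re ((M *m f) k ord0).
Proof. by rewrite /dqf ctr_delta -mulmxA -rowE mxE. Qed.

Lemma dqf_idelta M f k :
  dqf M f ('i%C *: delta_mx k ord0) = 2 * Im ((M *m f) k ord0).
Proof.
rewrite /dqf ctrZ ctr_delta -!scalemxAl mxE -mulmxA -rowE mxE.
by case: ((M *m f) k ord0) => a b /=; ring.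
Qed.

Lemma wgrad_dqf (g : 'cV[C]_m -> R) (H : 'M[C]_m) (z : 'cV[C]_m) :
  (forall d, is_derive (0 : R) 1 (fun t => g (z + rC t *: d)) (dqf H z d)) ->
  wgrad g z = H *m z.
Proof.
move=> hg; apply/matrixP => k j; rewrite ord1 mxE.
have -> : (fun t => g (z + Complex 0 t *: delta_mx k ord0)) =
          (fun t => g (z + rC t *: ('i%C *: delta_mx k ord0))).
  apply: funext => t; rewrite scalerA; congr (g (_ + _ *: _)).
  by apply/eqP; rewrite eq_complex /= !mulr0 !mul0r !mulr1 subrr addr0 !eqxx.
rewrite !derive1E !(@derive_val _ _ _ _ _ _ _ (hg _)).
rewrite dqf_delta dqf_idelta !mulrA mulVf ?pnatr_eq0 // !mul1r.
by case: ((H *m z) k ord0).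
Qed.

End FormDerivative.

Section LogDerivatives.
Context {R : realType}.

Lemma ln2_gt0 : 0 < ln (2 : R).
Proof. by rewrite ln_gt0 // ltr1n. Qed.

Lemma is_derive_log2_ratio {g h : R -> R} {x a b : R} :
  is_derive x 1 g a -> is_derive x 1 h b -> 0 < g x -> 0 < h x ->
  is_derive x 1 (fun t => log2 (g t / h t)) ((a / g x - b / h x) / ln 2).
Proof.
move=> ga hb gx0 hx0.
have hx_neq0 : h x != 0 by rewrite gt_eqF.
have D := is_deriveMf (is_derive_lnf (g := fun t => g t / h t) (divr_gt0 gx0 hx0)
  (is_deriveMf ga (is_deriveVf hx_neq0 hb))) (is_derive_cstf (ln 2)^-1 x).
apply: is_derive_eq D _.
by have := @ln2_gt0; rewrite /= => l2; field; rewrite ?gt_eqF.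
Qed.

Lemma sum_expR_gt0 n (r : 'I_n -> R) : (0 < n)%N -> 0 < \sum_(i < n) expR (r i).
Proof.
move=> n0; rewrite (bigD1 (Ordinal n0)) //= ltr_wpDr ?expR_gt0 //.
by rewrite sumr_ge0 // => i _; exact/ltW/expR_gt0.
Qed.

Lemma is_derive_softmin {n} {alpha : R} {r : 'I_n -> R -> R} {dr : 'I_n -> R} {x : R} :
  (0 < n)%N -> alpha != 0 -> (forall i, is_derive x 1 (r i) (dr i)) ->
  is_derive x 1 (fun t => - alpha * ln (n%:R^-1 * \sum_(i < n) expR (- r i t / alpha)))
    (\sum_(i < n) expR (- r i x / alpha) / (\sum_(l < n) expR (- r l x / alpha)) * dr i).
Proof.
move=> n0 alpha0 hr.
have De i := is_derive_expRf (is_deriveMf (is_deriveNf (hr i)) (is_derive_cstf alpha^-1 x)).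
have pos : 0 < n%:R^-1 * \sum_(i < n) expR (- r i x / alpha).
  by rewrite mulr_gt0 ?invr_gt0 ?ltr0n // sum_expR_gt0.
have D := is_deriveMf (is_derive_cstf (- alpha) x)
  (is_derive_lnf (g := fun t => n%:R^-1 * \sum_(i < n) expR (- r i t * alpha^-1))
     pos (is_deriveMf (is_derive_cstf n%:R^-1 x) (is_derive_sumf De))).
apply: is_derive_eq D _; rewrite /=.
have S0 : \sum_(l < n) expR (- r l x / alpha) != 0 by rewrite gt_eqF // sum_expR_gt0.
have n_neq0 : (n%:R : R) != 0 by rewrite pnatr_eq0 -lt0n.
have -> : \sum_(i < n) expR (- r i x / alpha) * (- r i x * 0 + alpha^-1 * - dr i)
    = - alpha^-1 * \sum_(i < n) expR (- r i x / alpha) * dr i.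
  by rewrite mulr_sumr; apply: eq_bigr => i _; ring.
under [RHS]eq_bigr => i _ do rewrite mulrAC.
by rewrite -mulr_suml; field; rewrite n_neq0 alpha0 S0.
Qed.

End LogDerivatives.

Section Objective.
Variables (R : realType) (Nt K : nat) (s : sysp R Nt K).
Hypotheses (hK : (0 < K)%N) (hgam : forall k, 0 < gam s k) (hsig : 0 < sig2 s)
  (hP : 0 < pow s) (halpha : 0 < alph s).
Local Notation C := R[i].
Local Notation n := (dimn Nt K).
Variables (f : 'cV[C]_n) (v : 'cV[R]_K.+1).
Hypothesis hf : f != 0.

Definition kkt_mx (X Y : 'I_K -> 'M[C]_n) (L M : 'M[C]_n) : 'M[C]_n :=
  \sum_(j < K)
     (rC (Rtgt s j) *: (rC (qf (X j) f)^-1 *: X j + rC (wv v (uslot j)) *: L)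
      + rC (Rpb s j f / qf (Y j) f) *: Y j
      + rC (wv v (uslot j) * Cu s f v j) *: M
      + rC (wv v (uslot j) * Rpb s j f) *: M
      + rC (Cu s f v j / qf (Y j) f) *: Y j)
   + rC (etamc s) *: (rC (Rtmc s * wv v ord_max) *: L
                      + rC (wv v ord_max * Cmc s f v) *: M).

Lemma AmatE : Amat s f v = rC (lam_num s f v) *: kkt_mx (Ap s) (Bp s) (LA s f) (LB s f).
Proof. by []. Qed.

Lemma BmatE : Bmat s f v = rC (lam_den s f v) *: kkt_mx (Bp s) (Ap s) (LB s f) (LA s f).
Proof. by []. Qed.

Lemma dqf_kkt_mx_sub X Y L M d :
  dqf (kkt_mx X Y L M) f d - dqf (kkt_mx Y X M L) f d =
  \sum_(j < K) (Rtgt s j - Rpb s j f - Cu s f v j) *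
     (dqf (X j) f d / qf (X j) f - dqf (Y j) f d / qf (Y j) f
      + wv v (uslot j) * (dqf L f d - dqf M f d))
  + etamc s * (Rtmc s - Cmc s f v) * wv v ord_max * (dqf L f d - dqf M f d).
Proof.
rewrite /kkt_mx !dqfD !dqf_sum opprD addrACA -sumrB; congr (_ + _).
  apply: eq_bigr => j _; rewrite !(dqfD, dqfZ).
  (* Without generalizing its atoms, [ring] compares them by unfolding the
     definitions, which is very slow. *)
  generalize (dqf (X j) f d) (dqf (Y j) f d) (qf (X j) f) (qf (Y j) f) (dqf L f d).
  generalize (dqf M f d) (Rtgt s j) (Rpb s j f) (Cu s f v j) (wv v (uslot j)).
  by move=> *; ring.
rewrite !(dqfD, dqfZ).
by generalize (Rtmc s) (Cmc s f v) (wv v ord_max) (dqf L f d) (dqf M f d) => *; ring.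
Qed.

Lemma shift_at0 (d : 'cV[C]_n) : f + rC 0 *: d = f.
Proof. by rewrite (_ : rC 0 = 0) ?scale0r ?addr0. Qed.

Lemma is_derive_rate (M N : 'M[C]_n) d :
  herm M -> herm N -> 0 < qf M f -> 0 < qf N f ->
  is_derive (0 : R) 1 (fun t => log2 (qf M (f + rC t *: d) / qf N (f + rC t *: d)))
    ((dqf M f d / qf M f - dqf N f d / qf N f) / ln 2).
Proof.
move=> hM hN M0 N0.
have := is_derive_log2_ratio (is_derive_form_line M f d hM) (is_derive_form_line N f d hN).
by rewrite /= shift_at0; apply.
Qed.

Lemma is_derive_Rpb j d :
  is_derive (0 : R) 1 (fun t => Rpb s j (f + rC t *: d))
    ((dqf (Ap s j) f d / qf (Ap s j) f - dqf (Bp s j) f d / qf (Bp s j) f) / ln 2).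
Proof.
by apply: is_derive_rate; rewrite ?Ap_rxcov ?Bp_rxcov;
  [exact: rxcov_herm | exact: rxcov_herm | exact: rxcov_qf_gt0 | exact: rxcov_qf_gt0].
Qed.

Lemma is_derive_Ssm d :
  is_derive (0 : R) 1 (fun t => Ssm s (f + rC t *: d))
    ((dqf (LA s f) f d - dqf (LB s f) f d) / ln 2).
Proof.
have DRc i : is_derive (0 : R) 1 (fun t => Rcb s i (f + rC t *: d))
    ((dqf (Ac s i) f d / qf (Ac s i) f - dqf (Bc s i) f d / qf (Bc s i) f) / ln 2).
  by apply: is_derive_rate; rewrite ?Ac_rxcov ?Bc_rxcov;
    [exact: rxcov_herm | exact: rxcov_herm | exact: rxcov_qf_gt0 | exact: rxcov_qf_gt0].
have := is_derive_softmin hK (lt0r_neq0 halpha) DRc.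
rewrite shift_at0 => D; apply: is_derive_eq D _.
rewrite /LA /LB !dqf_sum -sumrB mulr_suml; apply: eq_bigr => i _.
rewrite !dqfZ /piw; generalize (dqf (Ac s i) f d) (dqf (Bc s i) f d) (qf (Ac s i) f).
generalize (qf (Bc s i) f) (expR (- Rcb s i f / alph s)).
by generalize (\sum_(l < K) expR (- Rcb s l f / alph s)) => *; ring.
Qed.

Lemma is_derive_obj d :
  is_derive (0 : R) 1 (fun t => obj s (f + rC t *: d) v)
    (- (2 / ln 2) * (dqf (kkt_mx (Ap s) (Bp s) (LA s f) (LB s f)) f d
                     - dqf (kkt_mx (Bp s) (Ap s) (LB s f) (LA s f)) f d)).
Proof.
have DS := is_derive_Ssm d.
have Dj j := is_derive_sqrf (is_deriveBf (is_deriveBf (is_derive_cstf (Rtgt s j) 0)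
  (is_derive_Rpb j d)) (is_deriveMf (is_derive_cstf (wv v (uslot j)) 0) DS)).
have Dmc := is_deriveMf (is_derive_cstf (etamc s) 0) (is_derive_sqrf
  (is_deriveBf (is_derive_cstf (Rtmc s) 0) (is_deriveMf (is_derive_cstf (wv v ord_max) 0) DS))).
apply: is_derive_eq (is_deriveDf (is_derive_sumf Dj) Dmc) _.
rewrite dqf_kkt_mx_sub /= shift_at0 [RHS]mulrDr [in RHS]mulr_sumr /Cu /Cmc.
generalize (dqf (LA s f) f d) (dqf (LB s f) f d) (Ssm s f) (ln (2 : R)) => a b S l.
congr (_ + _); last by ring.
apply: eq_bigr => j _.
generalize (dqf (Ap s j) f d / qf (Ap s j) f) (dqf (Bp s j) f d / qf (Bp s j) f).
by generalize (Rpb s j f) => r x y; ring.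
Qed.

Lemma wgrad_obj : wgrad (fun g => obj s g v) f =
  (rC (- (2 / ln 2)) *: (kkt_mx (Ap s) (Bp s) (LA s f) (LB s f)
                         - kkt_mx (Bp s) (Ap s) (LB s f) (LA s f))) *m f.
Proof. by apply: wgrad_dqf => d; rewrite dqfZ dqfB; exact: is_derive_obj. Qed.

End Objective.

Lemma scaled_kernel_iff_eigen (R : realType) p (A B : 'M[R[i]]_p) (x : 'cV[R[i]]_p)
    (c a b : R) :
  c != 0 -> 0 < a -> 0 < b -> (rC b *: B) \in unitmx ->
  (rC c *: (A - B)) *m x = 0 <->
  invmx (rC b *: B) *m (rC a *: A) *m x = rC (a / b) *: x.
Proof.
move=> c0 a0 b0 hB.
have ca0 : rC c != 0 :> R[i] by rewrite rC_eq0.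
have ra0 : rC a != 0 :> R[i] by rewrite rC_eq0 gt_eqF.
have key : rC (a / b) *: ((rC b *: B) *m x) = rC a *: (B *m x).
  by rewrite -scalemxAl scalerA -rCM divfK // gt_eqF.
rewrite -scalemxAl; split.
  move/eqP; rewrite scaler_eq0 (negbTE ca0) /= mulmxBl subr_eq0 => /eqP hAB.
  by rewrite -mulmxA -scalemxAl hAB -key -scalemxAr mulmxA mulVmx // mul1mx.
move=> h; have : (rC a *: A) *m x = rC (a / b) *: ((rC b *: B) *m x).
  rewrite -[LHS]mul1mx -(mulmxV hB) -!mulmxA [invmx _ *m (_ *m x)]mulmxA h.
  by rewrite -scalemxAr.
by rewrite key -scalemxAl => /(scalerI ra0) hAB; rewrite mulmxBl hAB subrr scaler0.
Qed.

Theorem lemma1 (R : realType) (Nt K : nat) (s : sysp R Nt K)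
  (hK : (0 < K)%N) (hNt : (0 < Nt)%N)
  (hgam : forall k, 0 < gam s k) (hsig : 0 < sig2 s) (hP : 0 < pow s)
  (halpha : 0 < alph s) (heta : 0 < etamc s)
  (v : 'cV[R]_K.+1) (f : 'cV[R[i]]_(dimn Nt K))
  (hv : v != 0) (hf : f != 0) (hB : Bmat s f v \in unitmx) :
  wgrad (fun g => obj s g v) f = 0
  <-> invmx (Bmat s f v) *m Amat s f v *m f = rC (lam s f v) *: f.
Proof.
have num_gt0 : 0 < lam_num s f v by apply: prodr_gt0 => j _; exact: expR_gt0.
have den_gt0 : 0 < lam_den s f v by exact: expR_gt0.
have c0 : - (2 / ln 2) != 0 :> R.
  by rewrite oppr_eq0 mulf_neq0 // invr_eq0 gt_eqF // ln2_gt0.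
rewrite wgrad_obj // AmatE BmatE in hB *.
exact: scaled_kernel_iff_eigen.
Qed.
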